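(* Let $0<\alpha<1$ and let $n$ be sufficiently large in terms of $\alpha$. Let $G$ be a graph on $n$ vertices with $e(G)\geq n^{1+\alpha}$. Then $G$ contains a subgraph $G''$ on $m\geq n^{\alpha\frac{1-\alpha}{1+\alpha}}$ vertices such that $e(G'')\geq \frac13 m^{1+\alpha}$ and $\Delta(G'')\leq Km^{\alpha}$, where $K=10\cdot 2^{1/\alpha^2+1}$.
   Context: $e(G)$ is the number of edges and $\Delta(G)$ the maximum degree of $G$. *)

From mathcomp Require Import all_boot.
From Stdlib Require Import Reals.
Set Implicit Arguments. Unset Strict Implicit. Unset Printing Implicit Defensive.

Definition simple_graph (T : finType) (e : rel T) : Prop :=
  symmetric e /\ irreflexive e.

Definition nedges (T : finType) (e : rel T) : nat :=
  #|[set A : {set T} | [exists x, exists y,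
       [&& x != y, e x y & A == [set x; y]]]]|.

Definition deg (T : finType) (f : rel T) (x : T) : nat := #|[set y | f x y]|.

Definition maxdeg (T : finType) (S : {set T}) (f : rel T) : nat :=
  \max_(x in S) deg f x.

Definition subgraph (T : finType) (e : rel T) (S : {set T}) (f : rel T) : Prop :=
  symmetric f /\ (forall x y, f x y -> [&& e x y, x \in S & y \in S]).

From mathcomp Require Import all_boot.
From Stdlib Require Import Reals.
From mathcomp Require Import zify.
From Stdlib Require Import Lra Classical.
Set Implicit Arguments. Unset Strict Implicit. Unset Printing Implicit Defensive.

(* Put gam = (1+3a^2)/(1+a^2), which lies in (1, min 2 (1+a)), and
   q = 2^(1/a^2+1), so that q^(gam-1) = 4.  Let X be a nonempty vertex set
   maximizing e(X)/|X|^gam, where e(X) counts the edges spanned by X.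
   (1) Comparing X with the whole vertex set, and using e(X) <= |X|^2, gives
       |X| >= n^(a(1-a)/(1+a)) and e(X) >= |X|^(1+a).
   (2) The set H of vertices of degree above D = 8 q e(X)/|X| inside X has
       4 q |H| <= |X|.  Averaging over the 3|H|-subsets of X minus H yields a
       set Y of 4|H| vertices spanning a proportional share of the edges
       meeting H; maximality of X then bounds those edges by e(X)/3.
   (3) The remaining edges, at least 2e(X)/3 of them, have maximum degree at
       most D.  A largest subfamily of them with all degrees at most
       r = 10 q |X|^a still has at least |X|^(1+a)/3 edges (greedy capping);
       it is the required subgraph, on the vertex set X. *)
Lemma sum_indicator (I : finType) (B : {set I}) (c : pred I) :
  \sum_(i in B) (c i : nat) = #|[set i in B | c i]|.
Proof.
rewrite -sum1_card; apply/esym; rewrite big_mkcond /= [RHS]big_mkcond /=.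
by apply: eq_bigr => i _; rewrite inE; case: (i \in B); case: (c i).
Qed.

Section FamilyDegree.
Variable T : finType.
Implicit Types (F G : {set {set T}}) (W : {set T}) (v : T).

Definition fdeg F v : nat := #|[set A in F | v \in A]|.

Lemma sum_fdeg F W : \sum_(v in W) fdeg F v = \sum_(A in F) #|A :&: W|.
Proof.
transitivity (\sum_(v in W) \sum_(A in F) (v \in A : nat)).
  by apply: eq_bigr => v _; rewrite sum_indicator.
rewrite exchange_big /=; apply: eq_bigr => A _.
by rewrite sum_indicator; apply: eq_card => v; rewrite !inE andbC.
Qed.

Lemma sum_fdeg_pairs F W :
  (forall A, A \in F -> #|A| = 2) -> \sum_(v in W) fdeg F v <= 2 * #|F|.
Proof.
move=> pairF; rewrite sum_fdeg mulnC -sum_nat_const; apply: leq_sum => A AF.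
by rewrite -(pairF A AF) subset_leq_card ?subsetIl.
Qed.

Lemma fdeg_mono F G v : F \subset G -> fdeg F v <= fdeg G v.
Proof.
move=> FG; apply: subset_leq_card; apply/subsetP => A; rewrite !inE.
by case/andP=> /(subsetP FG) -> ->.
Qed.

Lemma fdeg_setU1 F A v : A \notin F -> fdeg (A |: F) v = (v \in A) + fdeg F v.
Proof.
move=> AF; rewrite /fdeg -(cardsID [set A] [set B in A |: F | v \in B]).
congr (_ + _); last first.
  by apply: eq_card => B; rewrite !inE; case: eqP => [->|]; rewrite ?(negbTE AF).
case: (boolP (v \in A)) => vA /=.
  by rewrite (setIidPr _) ?cards1 // sub1set !inE eqxx vA.
apply/eqP; rewrite cards_eq0; apply/eqP/setP => B; rewrite !inE.
by case: eqP => [->|]; rewrite ?(negbTE vA) ?andbF.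
Qed.

Lemma fdeg_split F G v : G \subset F -> fdeg F v = fdeg G v + fdeg (F :\: G) v.
Proof.
move=> GF; rewrite /fdeg -(cardsID G [set A in F | v \in A]); congr (_ + _).
  apply: eq_card => A; rewrite !inE.
  case: (boolP (A \in G)) => AG; last by rewrite andbF.
  by rewrite (subsetP GF A AG) andbT.
by apply: eq_card => A; rewrite !inE; case: (A \in G); case: (A \in F).
Qed.

End FamilyDegree.

Lemma averaging (I : finType) (L : {set I}) (w : I -> nat) (t : nat) :
  t <= #|L| -> exists Z : {set I}, [/\ Z \subset L, #|Z| = t &
    t * \sum_(v in L) w v <= #|L| * \sum_(v in Z) w v].
Proof.
move=> tL; have [k] : exists k, t + k = #|L| by exists (#|L| - t); lia.
elim: k t tL => [|k IH] t tL tkL; first by exists L; rewrite -tkL addn0.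
have [Z [ZL cZ hZ]] := IH t.+1 ltac:(lia) ltac:(lia).
have [z0 z0Z] : exists z, z \in Z by apply/set0Pn; rewrite -card_gt0 cZ.
(* Dropping a lightest element of Z keeps the proportional share. *)
case: (arg_minnP w z0Z) => z zZ' zmin; have zZ : z \in Z := zZ'.
exists (Z :\ z); split; first exact: subset_trans (subD1set Z z) ZL.
  by have := cardsD1 z Z; rewrite zZ cZ; lia.
have sZ : \sum_(v in Z) w v = w z + \sum_(v in Z :\ z) w v by rewrite (big_setD1 z).
have lightest : t.+1 * w z <= \sum_(v in Z) w v.
  by rewrite -cZ -sum_nat_const; apply: leq_sum => i /zmin.
rewrite sZ in hZ lightest.
have : t.+1 * (t * \sum_(v in L) w v) <= t.+1 * (#|L| * \sum_(v in Z :\ z) w v).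
  by nia.
by rewrite leq_pmul2l.
Qed.

Lemma exists_max (I : finType) (P : I -> Prop) (F : I -> R) (x0 : I) :
  P x0 -> exists x, P x /\ forall y, P y -> (F y <= F x)%R.
Proof.
move=> Px0.
suff [x [Px Hx]] : exists x, P x /\ forall y, y \in enum I -> P y -> (F y <= F x)%R.
  by exists x; split=> // y; apply: Hx; rewrite mem_enum.
elim: (enum I) => [|a s [x [Px Hx]]]; first by exists x0.
have [[Pa lt]|nlt] := classic (P a /\ (F x < F a)%R).
  exists a; split=> // y; rewrite inE => /orP [/eqP -> _|ys Py]; first lra.
  by have := Hx y ys Py; lra.
exists x; split=> // y; rewrite inE => /orP [/eqP -> Py|]; last exact: Hx.
by apply: Rnot_lt_le => lt; apply: nlt.
Qed.

Lemma INR_sum_le (I : finType) (A : {set I}) (F : I -> nat) (c : R) :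
  (forall i, i \in A -> (INR (F i) <= c)%R) ->
  (INR (\sum_(i in A) F i) <= INR #|A| * c)%R.
Proof.
move=> Fc; rewrite -sum1_card.
apply: (big_ind2 (fun a b : nat => (INR a <= INR b * c)%R)) => /=.
- lra.
- by move=> x1 x2 y1 y2 h1 h2; rewrite !plus_INR; lra.
- by move=> i /Fc /=; lra.
Qed.

Lemma INR_sum_ge (I : finType) (A : {set I}) (F : I -> nat) (c : R) :
  (forall i, i \in A -> (c <= INR (F i))%R) ->
  (INR #|A| * c <= INR (\sum_(i in A) F i))%R.
Proof.
move=> Fc; rewrite -sum1_card.
apply: (big_ind2 (fun b a : nat => (INR b * c <= INR a)%R)) => /=.
- lra.
- by move=> x1 x2 y1 y2 h1 h2; rewrite !plus_INR; lra.
- by move=> i /Fc /=; lra.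
Qed.

Section Capping.
Variables (T : finType) (F0 : {set {set T}}) (r : R).
Hypothesis F0_pairs : forall A, A \in F0 -> #|A| = 2.

Definition capped (E : {set {set T}}) : Prop :=
  E \subset F0 /\ forall v, (INR (fdeg E v) <= r)%R.

Lemma outside_max_capped_saturated (E : {set {set T}}) A :
  capped E -> (forall E', capped E' -> (INR #|E'| <= INR #|E|)%R) ->
  A \in F0 :\: E -> exists2 v, v \in A & (r < INR (fdeg E v) + 1)%R.
Proof.
move=> [EF0 Er] Emax; rewrite inE => /andP [AE AF0].
have [v vr] : exists v, ~ (INR (fdeg (A |: E) v) <= r)%R.
  apply: NNPP => nov; suff /Emax : capped (A |: E).
    by rewrite cardsU1 AE S_INR; lra.
  split; first by rewrite subUset sub1set AF0 EF0.
  by move=> v; apply: NNPP => ?; apply: nov; exists v.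
move: vr; rewrite fdeg_setU1 // plus_INR.
case: (boolP (v \in A)) => vA /= vr; first by exists v => //; lra.
by have := Er v; lra.
Qed.

Lemma capping (D : R) : (forall v, (INR (fdeg F0 v) <= D)%R) -> (1 < r)%R ->
  exists E, capped E /\
    ((INR #|F0| <= INR #|E|)%R \/ (INR #|F0| * (r - 1) <= INR #|E| * (2 * D))%R).
Proof.
move=> F0D r1.
have capped0 : capped set0.
  split=> [|v]; first exact: sub0set.
  have -> : fdeg set0 v = 0.
    by apply/eqP; rewrite /fdeg cards_eq0; apply/eqP/setP => A; rewrite !inE.
  by rewrite /=; lra.
have [E [[EF0 Er] Emax]] := exists_max (fun E : {set {set T}} => INR #|E|) capped0.
exists E; split=> //.
pose Sat := [set v | Rlt_dec r (INR (fdeg E v) + 1)].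
pose Rest := F0 :\: E.
(* Every member of Rest meets a saturated vertex; a saturated vertex lies in
   at least r - 1 members of E but in at most D - (r - 1) members of Rest. *)
have cover : #|Rest| <= \sum_(v in Sat) fdeg Rest v.
  rewrite sum_fdeg -sum1_card; apply: leq_sum => A /(outside_max_capped_saturated (conj EF0 Er) Emax).
  case=> v vA vr; rewrite card_gt0; apply/set0Pn; exists v.
  by rewrite !inE vA; case: Rlt_dec.
have restD : (INR (\sum_(v in Sat) fdeg Rest v) <= INR #|Sat| * (D - (r - 1)))%R.
  apply: INR_sum_le => v; rewrite inE; case: Rlt_dec => // vr _.
  by have := F0D v; rewrite (fdeg_split v EF0) plus_INR -/Rest; lra.
have satE : (INR #|Sat| * (r - 1) <= 2 * INR #|E|)%R.
  apply: Rle_trans (INR_sum_ge (F := fdeg E) _) _.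
    by move=> v; rewrite inE; case: Rlt_dec => // vr _; lra.
  have := le_INR _ _ (leP (sum_fdeg_pairs Sat (fun A AE => F0_pairs (subsetP EF0 A AE)))).
  by rewrite mult_INR.
have splitF0 : #|F0| = #|E| + #|Rest| by rewrite -(cardsID E F0) (setIidPr EF0).
have coverR := le_INR _ _ (leP cover).
have [Sat0 E0] := (pos_INR #|Sat|, pos_INR #|E|).
rewrite splitF0 plus_INR.
case: (Rle_lt_dec (D - (r - 1)) 0) => Dr; [left | right]; first nra.
have : (INR #|Rest| * (r - 1) <= 2 * INR #|E| * (D - (r - 1)))%R by nra.
nra.
Qed.

End Capping.

Section EdgeSets.
Variables (T : finType) (e : rel T).

Definition edge_set : {set {set T}} :=
  [set A : {set T} | [exists x, exists y, [&& x != y, e x y & A == [set x; y]]]].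

Definition inner_edges (X : {set T}) : {set {set T}} :=
  [set A in edge_set | A \subset X].

Lemma edge_setP A :
  A \in edge_set -> exists x y, [/\ x != y, e x y & A = [set x; y]].
Proof.
by rewrite inE => /existsP [x /existsP [y /and3P [xy exy /eqP ->]]]; exists x, y.
Qed.

Lemma inner_edges_pairs X A : A \in inner_edges X -> #|A| = 2.
Proof.
by rewrite inE => /andP [/edge_setP [x [y [xy _ ->]]] _]; rewrite cards2 xy.
Qed.

Lemma card_inner_edgesT : #|inner_edges setT| = nedges e.
Proof. by apply: eq_card => A; rewrite !inE subsetT andbT. Qed.

Lemma card_inner_edges_le X : #|inner_edges X| <= #|X| * #|X|.
Proof.
rewrite -cardsX; apply: leq_trans (leq_imset_card (fun p => [set p.1; p.2]) _).
apply: subset_leq_card; apply/subsetP => A; rewrite inE => /andP [/edge_setP].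
case=> x [y [_ _ ->]] /subsetP XY; apply/imsetP; exists (x, y) => //.
by rewrite inE /= !XY // !inE eqxx ?orbT.
Qed.

Lemma set2_eq (x y x' y' : T) : x != y ->
  [set x; y] = [set x'; y'] -> (x = x' /\ y = y') \/ (x = y' /\ y = x').
Proof.
move=> xy E.
have : x \in [set x'; y'] by rewrite -E !inE eqxx.
have : y \in [set x'; y'] by rewrite -E !inE eqxx orbT.
rewrite !inE => /orP [/eqP ey|/eqP ey] /orP [/eqP ex|/eqP ex]; try by [left | right].
all: by move: xy; rewrite ex ey eqxx.
Qed.

Lemma subgraph_of_edges (S : {set T}) (E : {set {set T}}) :
  simple_graph e -> E \subset inner_edges S ->
  exists f : rel T, [/\ subgraph e S f, #|E| <= nedges f &
    forall v, deg f v <= fdeg E v].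
Proof.
move=> [esym _] /subsetP ES.
have edgeE A : A \in E -> A \in edge_set /\ A \subset S.
  by move=> /ES; rewrite inE => /andP.
exists [rel x y | (x != y) && ([set x; y] \in E)]; split.
- split=> [x y /=|x y /= /andP [xy /edgeE [/edge_setP [x' [y' [_ exy' exy]]] xyS]]].
    by rewrite eq_sym setUC.
  rewrite !(subsetP xyS) ?inE ?eqxx ?orbT // !andbT.
  by case: (set2_eq xy exy) => [[-> ->] | [-> ->]]; rewrite // esym.
- apply: subset_leq_card; apply/subsetP => A AE.
  have [/edge_setP [x [y [xy _ eA]]] _] := edgeE A AE.
  by rewrite inE; apply/existsP; exists x; apply/existsP; exists y; rewrite /= xy -eA AE eqxx.
- move=> v; rewrite /deg /fdeg -(@card_in_imset _ _ (fun y => [set v; y])).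
    apply: subset_leq_card; apply/subsetP => A /imsetP [y].
    by rewrite !inE => /andP [_ vyE] ->; rewrite vyE !inE eqxx.
  move=> y1 y2; rewrite !inE => /andP [vy1 _] /andP [vy2 _] E12.
  have : y1 \in [set v; y2] by rewrite -E12 !inE eqxx orbT.
  by rewrite !inE => /orP [/eqP v1|/eqP //]; move: vy1; rewrite v1 eqxx.
Qed.

Lemma maxdeg_le (S : {set T}) (f : rel T) (c : R) :
  (forall v, (INR (deg f v) <= c)%R) -> (0 <= c)%R -> (INR (maxdeg S f) <= c)%R.
Proof.
move=> degc c0; case: (posnP #|S|) => [/eqP|S0].
  by rewrite cards_eq0 => /eqP ->; rewrite /maxdeg big_set0.
by rewrite /maxdeg; have [x _ ->] := eq_bigmax_cond (deg f) S0.
Qed.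

End EdgeSets.

Section EdgesAtSmallSet.
Variables (T : finType) (e : rel T) (X H : {set T}).
Hypothesis HX : H \subset X.

Definition edges_at : {set {set T}} :=
  [set A in inner_edges e X | A :&: H != set0].

Lemma pair_meeting_outside (A : {set T}) :
  #|A| = 2 -> A :&: H != set0 -> #|A :\: H| <= 1.
Proof. by move=> A2 AH; rewrite cardsD A2; move: AH; rewrite -card_gt0; lia. Qed.

(* How an edge at H sits relative to Y = H :|: Z, for Z outside H: if A lies
   in Y it has at most one vertex in Z, and otherwise it has none in Z but one
   in the rest of X. *)
Lemma edge_at_extension (Z A : {set T}) : Z \subset ~: H -> A \in edges_at ->
  #|A :&: Z| <= (A \subset H :|: Z) /\
  1 <= (A \subset H :|: Z) + #|A :&: (X :\: H :\: Z)|.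
Proof.
move=> /subsetP ZH; rewrite inE => /andP [AE AH].
have [A2 AX] : #|A| = 2 /\ A \subset X.
  by split; [apply: (inner_edges_pairs AE) | move: AE; rewrite inE => /andP []].
have Aout := pair_meeting_outside A2 AH.
have AZ_out : A :&: Z \subset A :\: H.
  by apply/subsetP => z; rewrite !inE => /andP [-> /ZH]; rewrite inE => ->.
case: (boolP (A \subset H :|: Z)) => [_ | /subsetPn [v vA]]; rewrite /=.
  by split; [apply: leq_trans (subset_leq_card AZ_out) Aout | ].
rewrite !inE negb_or => /andP [vH vZ]; split; last first.
  by rewrite card_gt0; apply/set0Pn; exists v; rewrite !inE vA vH vZ (subsetP AX).
rewrite leqn0 cards_eq0; apply/set0Pn => -[z zAZ].
have /card_le1_eqP /(_ z v) : #|A :\: H| <= 1 by [].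
rewrite (subsetP AZ_out z zAZ) !inE vA vH => /(_ isT isT) zv.
by move: zAZ vZ; rewrite inE zv => /andP [_ ->].
Qed.

(* Averaging: some 4|H|-subset Y of X, namely H plus the 3|H| vertices of X
   outside H with the most edges towards H, spans a proportional share of the
   edges at H. *)
Lemma edges_at_in_small_set : 4 * #|H| <= #|X| ->
  exists Y : {set T}, [/\ #|Y| = 4 * #|H|, Y \subset X &
    3 * #|H| * #|edges_at| <= #|X| * #|inner_edges e Y|].
Proof.
move=> HX4; set L := X :\: H; set B := edges_at; set t := 3 * #|H|.
have cL : #|L| = #|X| - #|H| by rewrite /L cardsD (setIidPr HX).
have tL : t <= #|L| by rewrite /t cL; lia.
have [Z [ZL cZ share]] := averaging (fdeg B) tL.
have ZH : Z \subset ~: H.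
  by apply: subset_trans ZL _; apply/subsetP => v; rewrite !inE => /andP [].
have HZ : H :&: Z = set0.
  by apply/setP => v; rewrite !inE; apply/negP => /andP [vH /(subsetP ZH)]; rewrite inE vH.
exists (H :|: Z); split.
- by rewrite cardsU HZ cards0 cZ /t; lia.
- by rewrite subUset HX (subset_trans ZL) ?subsetDl.
set inY := \sum_(A in B) (A \subset H :|: Z : nat).
have inY_le : inY <= #|inner_edges e (H :|: Z)|.
  rewrite /inY (sum_indicator B (fun A => A \subset H :|: Z)); apply: subset_leq_card; apply/subsetP => A.
  by rewrite !inE => /andP [/andP [/andP [-> _] _] ->].
have sumZ : \sum_(v in Z) fdeg B v <= inY.
  by rewrite sum_fdeg; apply: leq_sum => A AB; case: (edge_at_extension ZH AB).
have sumB : #|B| <= inY + \sum_(v in L :\: Z) fdeg B v.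
  rewrite sum_fdeg -big_split -sum1_card /=; apply: leq_sum => A AB.
  by case: (edge_at_extension ZH AB).
have splitL : \sum_(v in L) fdeg B v =
    \sum_(v in Z) fdeg B v + \sum_(v in L :\: Z) fdeg B v.
  by rewrite (big_setID Z) /= (setIidPr ZL).
rewrite splitL in share.
apply: leq_trans (_ : #|L| * inY <= _); last by rewrite leq_mul // cL leq_subr.
nia.
Qed.

End EdgesAtSmallSet.

Section RealFacts.
Local Open Scope R_scope.

Lemma Rpower_pos x y : 0 < Rpower x y.
Proof. exact: exp_pos. Qed.

Lemma ln_le_mono a b : 0 < a -> a <= b -> ln a <= ln b.
Proof.
move=> a0 [ab|->]; last lra.
by have := ln_increasing a b a0 ab; lra.
Qed.

Lemma ln_le_inv a b : 0 < a -> 0 < b -> ln a <= ln b -> a <= b.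
Proof.
move=> a0 b0 [lt|eq]; first by have := ln_lt_inv a b a0 b0 lt; lra.
by rewrite -(exp_ln a a0) -(exp_ln b b0) eq; lra.
Qed.

Lemma div_le_cross a b c d : 0 < b -> 0 < d -> a / b <= c / d -> a * d <= c * b.
Proof.
move=> b0 d0 le; have := Rmult_le_compat_r (b * d) _ _ (Rlt_le _ _ (Rmult_lt_0_compat _ _ b0 d0)) le.
have -> : a / b * (b * d) = a * d by field; lra.
have -> : c / d * (b * d) = c * b by field; lra.
done.
Qed.

(* The exponent in which the densest vertex set is measured. *)
Definition density_exponent (a : R) : R := (1 + 3 * a ^ 2) / (1 + a ^ 2).

Lemma density_exponent_facts a : 0 < a < 1 ->
  let gam := density_exponent a in
  [/\ 1 < gam, gam < 2, gam <= 1 + a,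
      (1 + a - gam) / (2 - gam) = a * ((1 - a) / (1 + a)) &
      Rpower (Rpower 2 (/ (a ^ 2) + 1)) (gam - 1) = 4].
Proof.
move=> a01 gam.
have [p a2] : 0 < 1 + a ^ 2 /\ 0 < a ^ 2 by split; nra.
have e1 : gam - 1 = 2 * a ^ 2 / (1 + a ^ 2) by rewrite /gam /density_exponent; field; lra.
have e2 : 1 + a - gam = a * (1 - a) ^ 2 / (1 + a ^ 2).
  by rewrite /gam /density_exponent; field; lra.
have e3 : 2 - gam = (1 - a ^ 2) / (1 + a ^ 2).
  by rewrite /gam /density_exponent; field; lra.
have pos1 : 0 < 2 * a ^ 2 / (1 + a ^ 2) by apply: Rdiv_lt_0_compat; lra.
have pos2 : 0 < a * (1 - a) ^ 2 / (1 + a ^ 2).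
  by apply: Rdiv_lt_0_compat => //; apply: Rmult_lt_0_compat; nra.
have pos3 : 0 < (1 - a ^ 2) / (1 + a ^ 2) by apply: Rdiv_lt_0_compat => //; nra.
split; try lra.
- by rewrite e2 e3; field; nra.
- rewrite Rpower_mult e1 (_ : _ * _ = INR 2); last by rewrite /=; field; lra.
  by rewrite Rpower_pow /=; lra.
Qed.

Lemma small_set_power_bound (h N q gam : R) : 0 < h -> 0 < q -> 1 < gam ->
  4 <= Rpower q (gam - 1) -> 4 * h * q <= N ->
  N * Rpower (4 * h) gam <= h * Rpower N gam.
Proof.
move=> h0 q0 g1 q4 hN.
have N0 : 0 < N by nra.
have lnq : ln 4 <= (gam - 1) * ln q by rewrite -ln_Rpower; apply: ln_le_mono; lra.
have lnN : ln 4 + ln h + ln q <= ln N.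
  by rewrite -!ln_mult; try apply: ln_le_mono; nra.
have gap := Rmult_le_compat_l (gam - 1) _ _ (Rlt_le _ _ (Rgt_minus _ _ g1)) lnN.
apply: ln_le_inv; try by apply: Rmult_lt_0_compat => //; apply: Rpower_pos.
rewrite !ln_mult ?ln_Rpower; try (by apply: Rpower_pos); try lra.
rewrite ln_mult; lra.
Qed.

(* Comparing the densest set (size N, e1 edges, measured with exponent gam)
   with the whole vertex set (size n, at least n^(1+a) edges), and using
   e1 <= N^2, bounds N from below and forces density N^(1+a) on it. *)
Lemma densest_size_bounds (n N e1 a gam : R) : 0 < N <= n -> gam < 2 ->
  gam <= 1 + a -> Rpower n (1 + a) * Rpower N gam <= e1 * Rpower n gam ->
  e1 <= N * N ->
  Rpower n ((1 + a - gam) / (2 - gam)) <= N /\ Rpower N (1 + a) <= e1.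
Proof.
move=> [N0 Nn] g2 ga dense sq.
have n0 : 0 < n by lra.
have e0 : 0 < e1.
  have := Rmult_lt_0_compat _ _ (Rpower_pos n (1 + a)) (Rpower_pos N gam).
  by have := Rpower_pos n gam; nra.
have dense_ln := ln_le_mono (Rmult_lt_0_compat _ _ (Rpower_pos _ _) (Rpower_pos _ _)) dense.
rewrite !ln_mult ?ln_Rpower in dense_ln; try (by apply: Rpower_pos); try done.
have sq_ln := ln_le_mono e0 sq; rewrite ln_mult in sq_ln; try done.
have nN_ln := ln_le_mono N0 Nn.
split; apply: ln_le_inv; try (by apply: Rpower_pos); try done; rewrite ln_Rpower.
- apply: (Rmult_le_reg_l (2 - gam)); first lra.
  rewrite (_ : _ * (_ * ln n) = (1 + a - gam) * ln n); first lra.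
  by field; lra.
- have := Rmult_le_pos _ _ (Rge_le _ _ (Rge_minus _ _ (Rle_ge _ _ ga)))
            (Rge_le _ _ (Rge_minus _ _ (Rle_ge _ _ nN_ln))).
  lra.
Qed.

(* The final count: a capped family of size E, obtained from F0 >= 2e1/3 edges
   of maximum degree D = 8 q e1 / N with cap r = 10 q N^a, has E >= N^(1+a)/3. *)
Lemma capped_family_large (N Na e1 f0 E q : R) : 0 < N -> 1 <= q -> 1 <= Na ->
  N * Na <= e1 -> 2 * e1 <= 3 * f0 ->
  f0 <= E \/ f0 * (10 * q * Na - 1) <= E * (2 * (8 * q * e1 / N)) ->
  N * Na <= 3 * E.
Proof.
move=> N0 q1 Na1 dense f0e [|loss]; first by nra.
have e0 : 0 < e1 by nra.
have cap : 8 * q * Na <= 10 * q * Na - 1 by nra.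
have lower : 2 * e1 * (8 * q * Na) * N <= 3 * (f0 * (10 * q * Na - 1)) * N.
  by apply: Rmult_le_compat_r; nra.
have upper : 3 * (f0 * (10 * q * Na - 1)) * N <= 3 * E * (16 * q * e1).
  have := Rmult_le_compat_r (3 * N) _ _ (ltac:(lra) : 0 <= 3 * N) loss.
  by rewrite (_ : E * (2 * (8 * q * e1 / N)) * (3 * N) = 3 * E * (16 * q * e1)); [lra | field; lra].
apply: (Rmult_le_reg_r (16 * q * e1)); nra.
Qed.

End RealFacts.

Section DensestSet.
Variables (T : finType) (e : rel T) (gam : R).

Definition densest (X : {set T}) : Prop :=
  forall Y : {set T}, Y != set0 ->
  (INR #|inner_edges e Y| * Rpower (INR #|X|) gam <=
   INR #|inner_edges e X| * Rpower (INR #|Y|) gam)%R.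

Lemma densest_exists : [set: T] != set0 -> exists2 X, X != set0 & densest X.
Proof.
move=> T0.
have [X [X0 Xmax]] := exists_max (P := fun X : {set T} => X != set0)
  (fun X => INR #|inner_edges e X| / Rpower (INR #|X|) gam)%R T0.
by exists X => // Y /Xmax; apply: div_le_cross; apply: Rpower_pos.
Qed.

Variable X : {set T}.
Hypothesis X_densest : densest X.

Lemma densest_few_edges_at (H : {set T}) (q : R) :
  H \subset X -> (1 <= q)%R -> (1 < gam)%R -> (4 <= Rpower q (gam - 1))%R ->
  (4 * INR #|H| * q <= INR #|X|)%R ->
  (3 * INR #|edges_at e X H| <= INR #|inner_edges e X|)%R.
Proof.
move=> HX q1 g1 q4 Hq; case: (posnP #|H|) => [/eqP|H0].
  rewrite cards_eq0 => /eqP H0.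
  have -> : edges_at e X H = set0.
    by apply/setP => A; rewrite !inE H0 setI0 eqxx !andbF.
  by rewrite cards0; have := pos_INR #|inner_edges e X|; rewrite [INR 0]/=; lra.
have H0R : (0 < INR #|H|)%R by apply: lt_0_INR; apply/ltP.
have H4 : 4 * #|H| <= #|X|.
  by apply/leP/INR_le; rewrite mult_INR (_ : INR 4 = 4%R) /=; [nra | lra].
have [Y [cY YX share]] := edges_at_in_small_set e HX H4.
have Y0 : Y != set0 by rewrite -card_gt0 cY muln_gt0.
have power := small_set_power_bound H0R (Rlt_le_trans _ _ _ Rlt_0_1 q1) g1 q4 Hq.
have cYR : INR #|Y| = (4 * INR #|H|)%R by rewrite cY mult_INR (_ : INR 4 = 4%R) //= ; lra.
rewrite -cYR in power; have YXd := X_densest Y0.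
have shareR := le_INR _ _ (leP share); rewrite !mult_INR /= in shareR.
have pX := Rpower_pos (INR #|X|) gam.
set eH := INR #|edges_at e X H| in shareR *; set eY := INR #|inner_edges e Y| in shareR YXd.
set eX := INR #|inner_edges e X| in YXd *.
(* 3|H| eH |X|^gam <= |X| eY |X|^gam <= |X| eX |Y|^gam <= eX |H| |X|^gam. *)
apply: (Rmult_le_reg_r (INR #|H| * Rpower (INR #|X|) gam)); first exact: Rmult_lt_0_compat.
have := Rmult_le_compat_r _ _ _ (Rlt_le _ _ pX) shareR.
have := Rmult_le_compat_l (INR #|X|) _ _ (pos_INR _) YXd.
have := Rmult_le_compat_l eX _ _ (pos_INR _) power.
nra.
Qed.

Lemma densest_low_degree_part (q : R) :
  (1 <= q)%R -> (1 < gam)%R -> (4 <= Rpower q (gam - 1))%R ->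
  0 < #|inner_edges e X| ->
  exists2 F0 : {set {set T}}, F0 \subset inner_edges e X &
    (2 * INR #|inner_edges e X| <= 3 * INR #|F0|)%R /\
    forall v, (INR (fdeg F0 v) <= 8 * q * INR #|inner_edges e X| / INR #|X|)%R.
Proof.
move=> q1 g1 q4 EX0.
set EX := inner_edges e X; set D := (8 * q * INR #|EX| / INR #|X|)%R.
have X0 : (0 < INR #|X|)%R.
  apply/lt_0_INR/ltP; have := leq_trans EX0 (card_inner_edges_le e X).
  by rewrite muln_gt0 andbb.
have EX0R : (0 < INR #|EX|)%R by apply/lt_0_INR/ltP.
set H := [set v in X | Rlt_dec D (INR (fdeg EX v))].
have HX : H \subset X by apply/subsetP => v; rewrite inE => /andP [].
have Hq : (4 * INR #|H| * q <= INR #|X|)%R.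
  have highdeg : (INR #|H| * D <= INR (\sum_(v in H) fdeg EX v))%R.
    by apply: INR_sum_ge => v; rewrite inE => /andP [_]; case: Rlt_dec => // lt _; exact: Rlt_le.
  have le2 := le_INR _ _ (leP (sum_fdeg_pairs H (@inner_edges_pairs _ e X))).
  rewrite mult_INR -/EX in le2.
  have := Rmult_le_compat_r _ _ _ (Rlt_le _ _ X0) (Rle_trans _ _ _ highdeg le2).
  rewrite (_ : INR #|H| * D * INR #|X| = INR #|H| * (8 * q * INR #|EX|))%R.
    by rewrite [INR 2]/=; nra.
  by rewrite /D; field; lra.
set F0 := [set A in EX | A :&: H == set0].
have splitEX : #|F0| + #|edges_at e X H| = #|EX|.
  rewrite -(cardsID [set A | A :&: H == set0] EX).
  by congr (_ + _); apply: eq_card => A; rewrite !inE andbC.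
exists F0; first by apply/subsetP => A; rewrite inE => /andP [].
split.
  have := densest_few_edges_at HX q1 g1 q4 Hq.
  by have := f_equal INR splitEX; rewrite plus_INR -/EX; lra.
move=> v; case: (boolP (v \in H)) => vH.
  rewrite (_ : fdeg _ v = 0); first by rewrite /= /D; apply: Rlt_le; apply: Rmult_lt_0_compat;
    [nra | apply: Rinv_0_lt_compat].
  apply/eqP; rewrite cards_eq0; apply/eqP/setP => A; rewrite !inE.
  apply/negP => /andP [/andP [_ /eqP AH] vA].
  have : v \in A :&: H by rewrite in_setI vA vH.
  by rewrite AH inE.
apply: Rle_trans (le_INR _ _ (leP (fdeg_mono v (_ : _ \subset EX)))) _.
  by apply/subsetP => A; rewrite inE => /andP [].
case: (boolP (v \in X)) => vX.
  by move: vH; rewrite inE vX /=; case: Rlt_dec => // nlt _; exact: Rnot_lt_le.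
rewrite (_ : fdeg EX v = 0); last first.
  apply/eqP; rewrite cards_eq0; apply/eqP/setP => A; rewrite !inE.
  by apply/negP => /andP [/andP [_ /subsetP AX] /AX]; apply/negP.
by rewrite /= /D; apply: Rlt_le; apply: Rmult_lt_0_compat; [nra | apply: Rinv_0_lt_compat].
Qed.

Lemma densest_bounded_degree_subgraph (a q : R) :
  simple_graph e -> (0 <= a)%R -> (1 <= q)%R -> (1 < gam)%R ->
  (4 <= Rpower q (gam - 1))%R ->
  (Rpower (INR #|X|) (1 + a) <= INR #|inner_edges e X|)%R ->
  exists f : rel T, [/\ subgraph e X f,
    (/ 3 * Rpower (INR #|X|) (1 + a) <= INR (nedges f))%R &
    (INR (maxdeg X f) <= 10 * q * Rpower (INR #|X|) a)%R].
Proof.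
move=> sg a0 q1 g1 q4 dense.
have EX0 : 0 < #|inner_edges e X|.
  by apply/ltP/INR_lt; apply: Rlt_le_trans dense; apply: Rpower_pos.
have Xpos : 0 < #|X|.
  by have := leq_trans EX0 (card_inner_edges_le e X); rewrite muln_gt0 andbb.
have X0 : (0 < INR #|X|)%R by apply/lt_0_INR/ltP.
have Xa1 : (1 <= Rpower (INR #|X|) a)%R.
  have := Rle_Rpower (INR #|X|) 0 a (le_INR 1 _ (leP Xpos)) a0.
  by rewrite Rpower_O.
have [F0 F0X [F0large F0deg]] := densest_low_degree_part q1 g1 q4 EX0.
have F0pairs A : A \in F0 -> #|A| = 2 by move/(subsetP F0X)/inner_edges_pairs.
have cap1 : (1 < 10 * q * Rpower (INR #|X|) a)%R by nra.
have [E [[EF0 Edeg] Elarge]] := capping F0pairs F0deg cap1.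
have [f [fsub fE fdeg]] := subgraph_of_edges sg (subset_trans EF0 F0X).
exists f; split=> //.
- apply: Rle_trans (le_INR _ _ (leP fE)); rewrite Rpower_plus Rpower_1 //.
  have := capped_family_large X0 q1 Xa1 _ F0large Elarge.
  by move: dense; rewrite Rpower_plus Rpower_1 // => dense /(_ dense); lra.
- apply: maxdeg_le => [v|]; last by nra.
  by apply: Rle_trans (le_INR _ _ (leP (fdeg v))) (Edeg v).
Qed.

End DensestSet.

Theorem lemma2p9 (alpha : R) :
  (0 < alpha < 1)%R ->
  exists N : nat, forall (n : nat), (N <= n)%N ->
  forall (T : finType) (e : rel T),
    #|T| = n -> simple_graph e ->
    (Rpower (INR n) (1 + alpha) <= INR (nedges e))%R ->
    exists (S : {set T}) (f : rel T),
      subgraph e S f /\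
      (Rpower (INR n) (alpha * ((1 - alpha) / (1 + alpha))) <= INR #|S|)%R /\
      (/ 3 * Rpower (INR #|S|) (1 + alpha) <= INR (nedges f))%R /\
      (INR (maxdeg S f) <=
         10 * Rpower 2 (/ (alpha ^ 2) + 1) * Rpower (INR #|S|) alpha)%R.
Proof.
move=> alpha01; set gam := density_exponent alpha.
have [g1 g2 ga exponent q4] := density_exponent_facts alpha01.
exists 1%N => n n1 T e cardT sg dense_e.
have T0 : [set: T] != set0 by rewrite -card_gt0 cardsT cardT.
have [X X0 Xd] := densest_exists e gam T0.
(* Comparing X with the whole vertex set gives the size and density of X. *)
have [Xsize Xdense] : (Rpower (INR n) ((1 + alpha - gam) / (2 - gam)) <= INR #|X|)%R /\
    (Rpower (INR #|X|) (1 + alpha) <= INR #|inner_edges e X|)%R.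
  apply: densest_size_bounds => //.
  - split; first by apply/lt_0_INR/ltP; rewrite card_gt0.
    by apply/le_INR/leP; rewrite -cardT max_card.
  - have := Xd _ T0; rewrite card_inner_edgesT cardsT cardT.
    by have := Rpower_pos (INR #|X|) gam; nra.
  - by rewrite -mult_INR; apply/le_INR/leP/card_inner_edges_le.
have q1 : (1 <= Rpower 2 (/ (alpha ^ 2) + 1))%R.
  have expo0 : (0 <= / (alpha ^ 2) + 1)%R.
    by have := Rinv_0_lt_compat _ (pow_lt _ 2 (proj1 alpha01)); lra.
  by have := Rle_Rpower 2 0 _ ltac:(lra) expo0; rewrite Rpower_O //; lra.
have [f [fsub fE fdeg]] := densest_bounded_degree_subgraph Xd sg
  (Rlt_le _ _ (proj1 alpha01)) q1 g1 (Req_le _ _ (esym q4)) Xdense.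
by exists X, f; rewrite -exponent.
Qed.
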